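(* Let $K$ be a nilpotent group of class three, let $m\ge 2$ and let $y_1,\ldots,y_m$ be elements of $K$ which generate $K$ modulo $Z(K)$. Assume that $y_i^{2^{r_i}}\in Z(K)$ for each $i$, where $1\leq r_1\leq\cdots\leq r_{m-1}\leq r_m$ are integers. If there exist integers $0\leq\gamma_i<r_{m-1}$, $i=1,\ldots,m-1$, such that $[y_m,y_i]^{2^{\gamma_i}}$ commutes with both $y_i$ and $y_m$, then $y_m^{2^{r_{m-1}}}\in Z(K)$.
   Context: Commutators are $[x,y]=x^{-1}y^{-1}xy$, and are left-normed: $[x,y,z]=[[x,y],z]$. *)

From Stdlib Require Import Arith.

Record Group := {
  carrier :> Type;
  gmul : carrier -> carrier -> carrier;
  ginv : carrier -> carrier;
  gone : carrier;
  gmulA : forall x y z, gmul x (gmul y z) = gmul (gmul x y) z;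
  gmul1l : forall x, gmul gone x = x;
  gmul1r : forall x, gmul x gone = x;
  gmulVl : forall x, gmul (ginv x) x = gone;
  gmulVr : forall x, gmul x (ginv x) = gone
}.

Arguments gmul {g} x y.
Arguments ginv {g} x.
Arguments gone {g}.

Fixpoint gpow {G : Group} (x : G) (n : nat) : G :=
  match n with
  | O => gone
  | S k => gmul (gpow x k) x
  end.

Definition comm {G : Group} (x y : G) : G :=
  gmul (gmul (gmul (ginv x) (ginv y)) x) y.

Definition center {G : Group} (x : G) : Prop :=
  forall g : G, gmul x g = gmul g x.

Fixpoint upper_central {G : Group} (n : nat) (x : G) : Prop :=
  match n with
  | O => x = gone
  | S k => forall g : G, upper_central k (comm x g)
  end.

Definition nilpotent_of_class (G : Group) (c : nat) : Prop :=
  (forall x : G, upper_central c x) /\ ~ (forall x : G, upper_central (pred c) x).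

Definition is_subgroup {G : Group} (H : G -> Prop) : Prop :=
  H gone /\ (forall x y, H x -> H y -> H (gmul x y)) /\ (forall x, H x -> H (ginv x)).

Definition generated {G : Group} (S : G -> Prop) (x : G) : Prop :=
  forall H : G -> Prop, is_subgroup H -> (forall s, S s -> H s) -> H x.

(** Write [N = 2^{r_{m-1}}]. For [i < m] put [a = y_i], [b = y_m], [c = [b,a]]
    and [k = 2^{gamma_i}], so that [a^N] is central, [c^k] commutes with [a] and
    [b], and [k] divides [N/2]. In a group of class three every double
    commutator is central, which gives the expansion
    [y^-1 x^n y = x^n [x,y]^n [[x,y],x]^(n(n-1)/2)]. Since [c^k] commutes with
    [a] and [b], the central elements [[[a,b],a]] and [[c,b]] have order
    dividing [k], hence dividing [N(N-1)/2]. The expansion for [(x,y) = (a,b)]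
    then says that [a^N] commutes with [b] iff [c^N = 1], so [c^N = 1]; for
    [(x,y) = (b,a)] it says that [b^N] commutes with [a] iff [c^N = 1]. Thus
    [y_m^N] commutes with every [y_i] and with [Z(K)], hence with all of [K]. *)

From Stdlib Require Import Arith Lia.

Definition commute {G : Group} (x y : G) : Prop := gmul x y = gmul y x.

Section GroupFacts.

Context {G : Group}.
Implicit Types x y z : G.

Lemma mulKg x y : gmul (ginv x) (gmul x y) = y.
Proof. rewrite gmulA, gmulVl, gmul1l; reflexivity. Qed.

Lemma mulgK x y : gmul (gmul y x) (ginv x) = y.
Proof. rewrite <- gmulA, gmulVr, gmul1r; reflexivity. Qed.

Lemma mulgKV x y : gmul (gmul y (ginv x)) x = y.
Proof. rewrite <- gmulA, gmulVl, gmul1r; reflexivity. Qed.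

Lemma mulgI x y z : gmul x y = gmul x z -> y = z.
Proof. intro E. rewrite <- (mulKg x y), <- (mulKg x z), E. reflexivity. Qed.

Lemma mulg_eq_self x y : gmul x y = x -> y = gone.
Proof. intro E. apply (mulgI x). rewrite gmul1r. exact E. Qed.

Lemma invg_unique x y : gmul x y = gone -> y = ginv x.
Proof. intro E. apply (mulgI x). rewrite E, gmulVr. reflexivity. Qed.

Lemma invMg x y : ginv (gmul x y) = gmul (ginv y) (ginv x).
Proof. symmetry. apply invg_unique. rewrite !gmulA, mulgK, gmulVr. reflexivity. Qed.

Lemma invgK x : ginv (ginv x) = x.
Proof. symmetry. apply invg_unique, gmulVl. Qed.

Lemma invg1 : ginv (@gone G) = gone.
Proof. symmetry. apply invg_unique, gmul1l. Qed.

Ltac gsimpl := repeat (rewrite ?invMg, ?invgK, ?invg1, ?gmulA, ?mulgK, ?mulgKV,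
   ?gmulVr, ?gmulVl, ?gmul1l, ?gmul1r).

Lemma gpowSl x n : gpow x (S n) = gmul x (gpow x n).
Proof.
  induction n as [|n IHn]; simpl in *; [gsimpl; reflexivity|].
  rewrite IHn at 1. rewrite gmulA. reflexivity.
Qed.

Lemma gpowD x n p : gpow x (n + p) = gmul (gpow x n) (gpow x p).
Proof.
  induction p as [|p IHp]; simpl; [rewrite Nat.add_0_r, gmul1r; reflexivity|].
  rewrite Nat.add_succ_r; simpl. rewrite IHp, gmulA. reflexivity.
Qed.

Lemma gpowM x n p : gpow x (n * p) = gpow (gpow x n) p.
Proof.
  induction p as [|p IHp]; simpl; [rewrite Nat.mul_0_r; reflexivity|].
  rewrite Nat.mul_succ_r, gpowD, IHp. reflexivity.
Qed.

Lemma gpow1n n : gpow (@gone G) n = gone.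
Proof. induction n as [|n IHn]; simpl; [|rewrite IHn, gmul1l]; reflexivity. Qed.

Lemma gpowVn x n : gpow (ginv x) n = ginv (gpow x n).
Proof.
  induction n as [|n IHn]; [simpl; gsimpl; reflexivity|].
  rewrite gpowSl. simpl. rewrite IHn, invMg. reflexivity.
Qed.

Lemma gpow_divide x n p : Nat.divide n p -> exists q, gpow x p = gpow (gpow x n) q.
Proof. intros [q ->]. exists q. rewrite Nat.mul_comm. apply gpowM. Qed.

Lemma gpow_eq1_divide x n p : gpow x n = gone -> Nat.divide n p -> gpow x p = gone.
Proof.
  intros E D. destruct (gpow_divide x n p D) as [q ->]. rewrite E. apply gpow1n.
Qed.

Lemma conj_gpow x y n :
  gmul (ginv y) (gmul (gpow x n) y) = gpow (gmul (ginv y) (gmul x y)) n.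
Proof.
  induction n as [|n IHn]; simpl; [gsimpl; reflexivity|].
  rewrite <- IHn. gsimpl. reflexivity.
Qed.

Lemma commute_sym x y : commute x y -> commute y x.
Proof. unfold commute. auto. Qed.

Lemma commuteX x y n : commute x y -> commute (gpow x n) y.
Proof.
  unfold commute. intro E. induction n as [|n IHn]; simpl; [gsimpl; reflexivity|].
  rewrite <- gmulA, E, gmulA, IHn, <- gmulA. reflexivity.
Qed.

Lemma commuteV x y : commute x y -> commute (ginv x) y.
Proof.
  unfold commute. intro E.
  rewrite <- (mulgK x (gmul (ginv x) y)), <- (gmulA _ (ginv x) y x), <- E, mulKg.
  reflexivity.
Qed.

Lemma centerX x n : center x -> center (gpow x n).
Proof. intros Cx g. apply commuteX, Cx. Qed.

Lemma commgC x y : gmul x y = gmul (gmul y x) (comm x y).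
Proof. unfold comm. gsimpl. reflexivity. Qed.

Lemma invg_comm x y : ginv (comm x y) = comm y x.
Proof. unfold comm. gsimpl. reflexivity. Qed.

Lemma commute_of_comm_eq1 x y : comm x y = gone -> commute x y.
Proof. intro E. unfold commute. rewrite commgC, E, gmul1r. reflexivity. Qed.

Lemma conjg_comm x y : gmul (ginv y) (gmul x y) = gmul x (comm x y).
Proof. unfold comm. gsimpl. reflexivity. Qed.

Section CentralCommutator.

Variables x y : G.
Hypothesis central_comm : center (comm x y).

Lemma gpow_commgC n : gmul (gpow x n) y = gmul (gmul y (gpow x n)) (gpow (comm x y) n).
Proof.
  induction n as [|n IHn]; simpl; [gsimpl; reflexivity|].
  rewrite <- gmulA, (commgC x y), !gmulA, IHn, <- !gmulA.
  rewrite (gmulA _ (gpow (comm x y) n) x), (centerX _ n central_comm x).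
  gsimpl. reflexivity.
Qed.

Lemma comm_gpow_eq1 n : commute (gpow x n) y -> gpow (comm x y) n = gone.
Proof.
  intro E. pose proof (gpow_commgC n) as F. rewrite E in F.
  symmetry in F. exact (mulg_eq_self _ _ F).
Qed.

End CentralCommutator.

Fixpoint binom2 (n : nat) : nat :=
  match n with 0 => 0 | S k => binom2 k + k end.

Lemma divide_binom2_double M : Nat.divide M (binom2 (2 * M)).
Proof.
  assert (E : forall n, 2 * binom2 n + n = n * n).
  { induction n as [|n IHn]; simpl; [reflexivity|]. nia. }
  exists (2 * M - 1). specialize (E (2 * M)). destruct M; [reflexivity|]. nia.
Qed.

Lemma gpow_mulC_central x u n : center (comm u x) ->
  gpow (gmul x u) n = gmul (gmul (gpow x n) (gpow u n)) (gpow (comm u x) (binom2 n)).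
Proof.
  intro Ce. set (e := comm u x) in *.
  induction n as [|n IHn]; simpl; [gsimpl; reflexivity|].
  rewrite IHn, gpowD, <- !gmulA, (gmulA _ (gpow e (binom2 n)) x), (centerX _ _ Ce x),
    <- !gmulA, (centerX _ _ Ce u), (gmulA _ (gpow u n) x), (gpow_commgC u x Ce).
  gsimpl. rewrite <- (gmulA _ _ (gpow e n) u), (centerX _ _ Ce u).
  rewrite <- (gmulA _ _ (gpow e (binom2 n)) (gpow e n)), (centerX _ _ Ce (gpow e n)).
  gsimpl. reflexivity.
Qed.

End GroupFacts.

Section ClassThree.

Context {G : Group}.
Hypothesis comm2_central : forall x y z : G, center (comm (comm x y) z).

Lemma commute_gpow_iff (x y : G) n :
  gpow (comm (comm x y) x) (binom2 n) = gone ->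
  (commute (gpow x n) y <-> gpow (comm x y) n = gone).
Proof.
  intro E.
  assert (Conj : gmul (ginv y) (gmul (gpow x n) y) = gmul (gpow x n) (gpow (comm x y) n)).
  { rewrite conj_gpow, conjg_comm, gpow_mulC_central, E, gmul1r by apply comm2_central.
    reflexivity. }
  unfold commute. split; intro H.
  - rewrite H, mulKg in Conj. symmetry in Conj. exact (mulg_eq_self _ _ Conj).
  - rewrite H, gmul1r in Conj. rewrite <- Conj at 2.
    rewrite gmulA, gmulVr, gmul1l. reflexivity.
Qed.

Lemma commute_gpow_double (a b : G) M k :
  Nat.divide k M ->
  commute (gpow (comm b a) k) a -> commute (gpow (comm b a) k) b ->
  center (gpow a (2 * M)) -> commute (gpow b (2 * M)) a.
Proof.
  intros Dk Ca Cb Za. set (N := 2 * M).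
  assert (DN : Nat.divide k (binom2 N))
    by exact (Nat.divide_trans _ _ _ Dk (divide_binom2_double M)).
  assert (Eab : gpow (comm (comm a b) a) (binom2 N) = gone).
  { apply (gpow_eq1_divide _ k); [|exact DN].
    apply comm_gpow_eq1; [apply comm2_central|].
    rewrite <- invg_comm, gpowVn. apply commuteV, Ca. }
  assert (EcN : gpow (comm b a) N = gone).
  { rewrite <- invg_comm, gpowVn, <- invg1. f_equal.
    apply (commute_gpow_iff a b N Eab), Za. }
  assert (Eba : gpow (comm (comm b a) b) (binom2 N) = gone).
  { apply (gpow_eq1_divide _ k); [|exact DN].
    apply comm_gpow_eq1; [apply comm2_central | exact Cb]. }
  apply (commute_gpow_iff b a N Eba), EcN.
Qed.

End ClassThree.

Lemma comm2_central_of_class3 (G : Group) :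
  (forall x : G, upper_central 3 x) -> forall x y z : G, center (comm (comm x y) z).
Proof. intros H x y z g. apply commute_of_comm_eq1, (H x y z g). Qed.

Lemma center_of_commute_generators (G : Group) (S : G -> Prop) (p : G) :
  (forall x, generated (fun z => S z \/ center z) x) ->
  (forall s, S s -> commute p s) -> center p.
Proof.
  intros Gen Cs g. apply (Gen g (commute p)).
  - split; [unfold commute; rewrite gmul1l, gmul1r; reflexivity|]. split.
    + unfold commute. intros x z Hx Hz. rewrite gmulA, Hx, <- gmulA, Hz, gmulA. reflexivity.
    + intros x Hx. apply commute_sym, commuteV, commute_sym, Hx.
  - intros s [Ss | Zs]; [exact (Cs s Ss) | apply commute_sym, Zs].
Qed.

Lemma le_of_incr_on (r : nat -> nat) m :
  (forall i, 1 <= i < m -> r i <= r (S i)) ->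
  forall i j, 1 <= i -> i <= j -> j <= m -> r i <= r j.
Proof.
  intros Incr i j Hi Hij Hj. induction Hij as [|j Hij IH]; [reflexivity|].
  specialize (Incr j ltac:(lia)). specialize (IH ltac:(lia)). lia.
Qed.

Lemma divide_pow_pow p a b : a <= b -> Nat.divide (p ^ a) (p ^ b).
Proof.
  intro Hab. exists (p ^ (b - a)). rewrite <- Nat.pow_add_r. f_equal. lia.
Qed.

Theorem lemma2p4 (K : Group) (m : nat) (y : nat -> K) (r : nat -> nat) :
  nilpotent_of_class K 3 ->
  2 <= m ->
  (* y_1, ..., y_m generate K modulo Z(K) *)
  (forall x : K,
     generated (fun z => (exists i, 1 <= i <= m /\ z = y i) \/ center z) x) ->
  (forall i, 1 <= i <= m -> center (gpow (y i) (2 ^ r i))) ->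
  1 <= r 1 ->
  (forall i, 1 <= i < m -> r i <= r (S i)) ->
  (exists gamma : nat -> nat,
     forall i, 1 <= i <= m - 1 ->
       gamma i < r (m - 1) /\
       let c := gpow (comm (y m) (y i)) (2 ^ gamma i) in
       gmul c (y i) = gmul (y i) c /\ gmul c (y m) = gmul (y m) c) ->
  center (gpow (y m) (2 ^ r (m - 1))).
Proof.
  intros [Class3 _] _ Gen Zy _ Incr [gamma Hgamma].
  apply (center_of_commute_generators K _ _ Gen). intros s [i [Hi ->]].
  destruct (Nat.eq_dec i m) as [->|Hne]; [apply commuteX; reflexivity|].
  destruct (Hgamma i ltac:(lia)) as [Hgi [Ca Cb]].
  set (R := r (m - 1)) in *.
  replace (2 ^ R) with (2 * 2 ^ (R - 1))
    by (rewrite <- Nat.pow_succ_r'; f_equal; lia).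
  apply (commute_gpow_double (comm2_central_of_class3 K Class3) _ _ _ (2 ^ gamma i));
    [apply divide_pow_pow; lia | exact Ca | exact Cb |].
  rewrite <- Nat.pow_succ_r', Nat.sub_1_r, Nat.succ_pred_pos by lia.
  assert (Hri : r i <= R) by (apply (le_of_incr_on r m Incr); lia).
  destruct (gpow_divide (y i) _ _ (divide_pow_pow 2 _ _ Hri)) as [q ->].
  apply centerX, Zy. lia.
Qed.
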